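(* Let $F$ be an $m\times n$ matrix, $B$ an $m\times p$ matrix and $H$ an $l\times n$ matrix. Let $x\in\mathbb{R}^n$ satisfy $Fx=Bf$ for an unknown $f\in\mathbb{R}^p$, and let the observation be $y=Hx+\eta\in\mathbb{R}^l$, where $\eta$ is a realization of a zero-mean random $l$-vector with unknown correlation matrix $R_\eta=E\eta\eta'$. Suppose $$\mathscr G=\{f\in\mathbb{R}^p:(Q_1f,f)_p\le 1\},\qquad \mathscr G_2=\{R_\eta:\operatorname{tr}(Q_2R_\eta)\le 1\},$$ where $Q_1$ ($p\times p$) and $Q_2$ ($l\times l$) are symmetric positive definite matrices. Let $\mathscr F=\{F'z+H'u: z\in\mathbb{R}^m,u\in\mathbb{R}^l\}$. If $\ell\in\mathscr F$, then the minimax a priori estimate of $x\mapsto(\ell,x)_n$ is $\widehat{(\ell,x)}=(\hat u,y)_l$ (i.e. $\hat c=0$) with $\hat u=Q_2Hp$, where $p$ together with some $\hat z\in\mathbb{R}^m$ solves $$Fp=BQ_1^{-1}B'\hat z,\qquad F'\hat z=\ell-H'Q_2Hp,$$ and the minimax a priori error equals $$\sup_{x,R_\eta}E[(\ell,x)_n-\widehat{(\ell,x)}]^2=(\ell,p)_n.$$ If $\ell\notin\mathscr F$, then the minimax a priori error is infinite.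
   Context: $(\cdot,\cdot)_k$ is the Euclidean inner product on $\mathbb{R}^k$; $B'$ is the transpose. For $\ell\in\mathbb{R}^n$, estimates of $(\ell,x)_n$ are affine functions $y\mapsto(u,y)_l+c$, $u\in\mathbb{R}^l$, $c\in\mathbb{R}$, with worst-case error $\sigma(u,c)=\sup\{E[(\ell,x)_n-(u,y)_l-c]^2: Fx\in B(\mathscr G), R_\eta\in\mathscr G_2\}$, where $B(\mathscr G)=\{Bf:f\in\mathscr G\}$. The minimax a priori (mean-squared) estimate is $(\hat u,y)_l+\hat c$ with $\sigma(\hat u,\hat c)=\inf_{u,c}\sigma(u,c)$; this infimum $\hat\sigma$ is the minimax a priori error. *)

From HB Require Import structures.
From mathcomp Require Import all_boot all_order all_algebra.
From mathcomp Require Import all_classical all_reals all_analysis.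
Set Implicit Arguments. Unset Strict Implicit. Unset Printing Implicit Defensive.
Import Order.TTheory GRing.Theory Num.Theory.
Local Open Scope ring_scope.

Definition dotv {R : realType} {k : nat} (u v : 'cV[R]_k) : R :=
  \sum_(i < k) u i 0 * v i 0.

Definition spd {R : realType} {k : nat} (Q : 'M[R]_k) : Prop :=
  Q^T = Q /\ forall v : 'cV[R]_k, v != 0 -> 0 < dotv (Q *m v) v.

(* the random l-vector eta given componentwise, evaluated at an outcome w *)
Definition rvec {R : realType} {T : Type} {l : nat} (eta : 'I_l -> T -> R)
  (w : T) : 'cV[R]_l := \col_i eta i w.

Definition corr_mx {d} {T : measurableType d} {R : realType}
  (P : probability T R) {l : nat} (eta : 'I_l -> T -> R) : 'M[R]_l :=
  \matrix_(i, j) fine ('E_P[eta i \* eta j])%E.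

(* admissible noise: zero-mean random l-vector with finite second moments
   (so that its correlation matrix exists) and R_eta in G_2 *)
Definition admissible_noise {d} {T : measurableType d} {R : realType}
  (P : probability T R) {l : nat} (Q2 : 'M[R]_l) (eta : 'I_l -> T -> R) : Prop :=
  (forall i, eta i \in Lfun P 2%:E) /\
  (forall i, ('E_P[eta i] = 0)%E) /\
  \tr (Q2 *m corr_mx P eta) <= 1.

(* worst-case mean-squared error sigma(u,c) of the affine estimate
   y |-> (u,y)_l + c of (ell,x)_n, y = H x + eta, over all x with
   F x = B f, (Q1 f, f) <= 1, and all admissible noises (on any probability
   space). *)
Definition sigma_err {R : realType} {m n p l : nat}
  (F : 'M[R]_(m, n)) (B : 'M[R]_(m, p)) (H : 'M[R]_(l, n))
  (Q1 : 'M[R]_p) (Q2 : 'M[R]_l) (ell : 'cV[R]_n)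
  (u : 'cV[R]_l) (c : R) : \bar R :=
  ereal_sup [set v : \bar R |
    exists (x : 'cV[R]_n) (f : 'cV[R]_p),
      F *m x = B *m f /\ dotv (Q1 *m f) f <= 1 /\
      exists (d : measure_display) (T : measurableType d)
             (P : probability T R) (eta : 'I_l -> T -> R),
        admissible_noise P Q2 eta /\
        v = ('E_P[fun w => ((dotv ell x - (dotv u (H *m x + rvec eta w) + c)) ^+ 2)%R])%E].

Definition minimax_err {R : realType} {m n p l : nat}
  (F : 'M[R]_(m, n)) (B : 'M[R]_(m, p)) (H : 'M[R]_(l, n))
  (Q1 : 'M[R]_p) (Q2 : 'M[R]_l) (ell : 'cV[R]_n) : \bar R :=
  ereal_inf [set sigma_err F B H Q1 Q2 ell u c | u in setT & c in setT].

Definition scrF {R : realType} {m n l : nat}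
  (F : 'M[R]_(m, n)) (H : 'M[R]_(l, n)) : set 'cV[R]_n :=
  [set F^T *m z + H^T *m u | z in setT & u in setT].

(* For an estimate (u, y) + c the error is
   (ell - H'u, x) - c - (u, eta): a bias controlled through F x = B f and
   (Q1 f, f) <= 1, plus a zero-mean noise term whose variance is at most
   (Q2^-1 u, u) by Cauchy-Schwarz in the Q2-metric and tr (Q2 R_eta) <= 1.
   If ell = F'z + H'u, the saddle-point system for (p, z) is solvable because
   its (symmetric) matrix annihilates only vectors orthogonal to (ell, 0).  Put
   A = (Q1^-1 B'z, B'z) and C = (Q2 H p, H p), so that (ell, p) = A + C.  For
   u = Q2 H p, c = 0 the bias is (B'z, f), of square at most A, and the noise
   variance is at most C.  Conversely, testing any (u, c) against x = a p and
   a fair-coin noise +-b H p gives an error of at least 2X - A + 2Y - C for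
   X + Y = (ell, p), i.e. at least A + C.  If ell is not of this form, some x
   with F x = 0 = H x has (ell, x) <> 0, and its multiples make the error
   unbounded. *)

From HB Require Import structures.
From mathcomp Require Import all_boot all_order all_algebra.
From mathcomp Require Import all_classical all_reals all_analysis.
From mathcomp Require Import ring lra.
Set Implicit Arguments. Unset Strict Implicit. Unset Printing Implicit Defensive.
Import Order.TTheory GRing.Theory Num.Theory.
Local Open Scope ring_scope.

Section InnerProduct.
Variable R : realType.
Implicit Types k j : nat.

Lemma dotvE k (u v : 'cV[R]_k) : dotv u v = (u^T *m v) 0 0.
Proof. by rewrite /dotv !mxE; apply: eq_bigr => i _; rewrite !mxE. Qed.

Lemma dotvC k (u v : 'cV[R]_k) : dotv u v = dotv v u.
Proof. by rewrite /dotv; apply: eq_bigr => i _; rewrite mulrC. Qed.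

Lemma dotv_mulmxl k j (A : 'M[R]_(k, j)) (u : 'cV[R]_j) (v : 'cV[R]_k) :
  dotv (A *m u) v = dotv u (A^T *m v).
Proof. by rewrite !dotvE trmx_mul mulmxA. Qed.

Lemma dotv_mulmxr k j (A : 'M[R]_(k, j)) (u : 'cV[R]_k) (v : 'cV[R]_j) :
  dotv u (A *m v) = dotv (A^T *m u) v.
Proof. by rewrite dotvC dotv_mulmxl dotvC. Qed.

Lemma dotvDl k (u w v : 'cV[R]_k) : dotv (u + w) v = dotv u v + dotv w v.
Proof. by rewrite !dotvE linearD /= mulmxDl mxE. Qed.

Lemma dotvDr k (u w v : 'cV[R]_k) : dotv v (u + w) = dotv v u + dotv v w.
Proof. by rewrite !dotvE mulmxDr mxE. Qed.

Lemma dotvZl k a (u v : 'cV[R]_k) : dotv (a *: u) v = a * dotv u v.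
Proof. by rewrite !dotvE linearZ /= -scalemxAl mxE. Qed.

Lemma dotvZr k a (u v : 'cV[R]_k) : dotv v (a *: u) = a * dotv v u.
Proof. by rewrite !dotvE -scalemxAr mxE. Qed.

Lemma dotvNl k (u v : 'cV[R]_k) : dotv (- u) v = - dotv u v.
Proof. by rewrite -scaleN1r dotvZl mulN1r. Qed.

Lemma dotvNr k (u v : 'cV[R]_k) : dotv v (- u) = - dotv v u.
Proof. by rewrite -scaleN1r dotvZr mulN1r. Qed.

Lemma dotvBl k (u w v : 'cV[R]_k) : dotv (u - w) v = dotv u v - dotv w v.
Proof. by rewrite dotvDl dotvNl. Qed.

Lemma dotv0l k (v : 'cV[R]_k) : dotv 0 v = 0.
Proof. by rewrite /dotv big1 // => i _; rewrite mxE mul0r. Qed.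

Lemma dotv0r k (v : 'cV[R]_k) : dotv v 0 = 0.
Proof. by rewrite dotvC dotv0l. Qed.

Lemma dotv_col_mx k j (x y : 'cV[R]_k) (u v : 'cV[R]_j) :
  dotv (col_mx x u) (col_mx y v) = dotv x y + dotv u v.
Proof. by rewrite !dotvE tr_col_mx mul_row_col mxE. Qed.

Lemma dotv_form_scale k (Q : 'M[R]_k) a (v : 'cV[R]_k) :
  dotv (Q *m (a *: v)) (a *: v) = a ^+ 2 * dotv (Q *m v) v.
Proof. by rewrite -scalemxAr dotvZl dotvZr mulrA -expr2. Qed.

Lemma dotv_form_opp k (Q : 'M[R]_k) (v : 'cV[R]_k) :
  dotv (Q *m - v) (- v) = dotv (Q *m v) v.
Proof. by rewrite -scaleN1r dotv_form_scale sqrrN expr1n mul1r. Qed.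

End InnerProduct.

Section PositiveDefinite.
Context {R : realType} {k : nat} {Q : 'M[R]_k}.
Hypothesis Q_spd : spd Q.

Lemma spd_form_ge0 (v : 'cV[R]_k) : 0 <= dotv (Q *m v) v.
Proof.
have [->|v0] := eqVneq v 0; first by rewrite mulmx0 dotv0l.
exact: ltW (Q_spd.2 _ v0).
Qed.

Lemma spd_form_eq0 (v : 'cV[R]_k) : dotv (Q *m v) v = 0 -> v = 0.
Proof. by move=> Qv0; apply/eqP; apply: contraT => /(Q_spd.2 v); rewrite Qv0 ltxx. Qed.

Lemma spd_unitmx : Q \in unitmx.
Proof.
rewrite unitmxE unitfE; apply/negP => /det0P [v v0 vQ].
have: v^T = 0 by apply: spd_form_eq0; rewrite -{1}Q_spd.1 -trmx_mul vQ trmx0 dotv0l.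
by move/eqP; rewrite -trmx0 (inj_eq (@trmx_inj _ _ _)) (negbTE v0).
Qed.

Lemma spd_invmxK (v : 'cV[R]_k) : Q *m (invmx Q *m v) = v.
Proof. by rewrite mulmxA mulmxV ?spd_unitmx // mul1mx. Qed.

Lemma spd_invmx_tr : (invmx Q)^T = invmx Q.
Proof. by rewrite trmx_inv Q_spd.1. Qed.

Lemma spd_invmx_form (v : 'cV[R]_k) :
  dotv (invmx Q *m v) v = dotv (Q *m (invmx Q *m v)) (invmx Q *m v).
Proof. by rewrite spd_invmxK dotvC. Qed.

Lemma spd_invmx_form_ge0 (v : 'cV[R]_k) : 0 <= dotv (invmx Q *m v) v.
Proof. by rewrite spd_invmx_form spd_form_ge0. Qed.

Lemma spd_form_sym (x y : 'cV[R]_k) : dotv (Q *m x) y = dotv (Q *m y) x.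
Proof. by rewrite dotv_mulmxl Q_spd.1 dotvC. Qed.

(* The discriminant of the nonnegative quadratic t |-> (Q (f - t w), f - t w),
   with Q w = v. *)
Lemma spd_Cauchy_Schwarz (v f : 'cV[R]_k) :
  dotv v f ^+ 2 <= dotv (invmx Q *m v) v * dotv (Q *m f) f.
Proof.
rewrite spd_invmx_form -{1}(spd_invmxK v); set w := invmx Q *m v.
have [->|w_neq0] := eqVneq w 0; first by rewrite mulmx0 !dotv0l expr0n mul0r.
set a := dotv (Q *m w) w; set b := dotv (Q *m w) f; set c := dotv (Q *m f) f.
have a_gt0 : 0 < a by exact: Q_spd.2.
have := spd_form_ge0 (f - (b / a) *: w).
rewrite mulmxBr -scalemxAr !dotvBl !dotvZl ![dotv _ (f - _)]dotvC !dotvBl !dotvZl.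
rewrite ![dotv f _]dotvC ![dotv w _]dotvC (spd_form_sym f w) -/a -/b -/c.
have -> : c - b / a * b - b / a * (b - b / a * a) = (a * c - b ^+ 2) / a.
  by field; rewrite gt_eqF.
by rewrite pmulr_lge0 ?invr_gt0 // subr_ge0.
Qed.

End PositiveDefinite.

Section Range.
Variable R : realType.

Lemma tr_range_of_orth_ker k j (M : 'M[R]_(k, j)) (b : 'cV[R]_j) :
  (forall x, M *m x = 0 -> dotv b x = 0) -> exists w : 'cV[R]_k, b = M^T *m w.
Proof.
move=> b_orth.
have /submxP [D bD] : (b^T <= M)%MS.
  rewrite submxE; apply/eqP/matrixP => i i'; rewrite [i]ord1 [RHS]mxE.
  have := b_orth (cokermx M *m delta_mx i' 0).
  by rewrite mulmxA mulmx_coker mul0mx dotvE mulmxA -colE mxE => ->.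
by exists D^T; rewrite -trmx_mul -bD trmxK.
Qed.

Variables (m n l : nat) (F : 'M[R]_(m, n)) (H : 'M[R]_(l, n)) (ell : 'cV[R]_n).

Lemma scrF_orth_ker (x : 'cV[R]_n) :
  scrF F H ell -> F *m x = 0 -> H *m x = 0 -> dotv ell x = 0.
Proof.
move=> [z _ [u _ <-]] Fx Hx.
by rewrite dotvDl !dotv_mulmxl !trmxK Fx Hx !dotv0r addr0.
Qed.

Lemma notin_scrF_ker :
  ~ scrF F H ell -> exists x, [/\ F *m x = 0, H *m x = 0 & dotv ell x != 0].
Proof.
move=> ell_notin; apply: contrapT => no_x; apply: ell_notin.
have [w ->] : exists w, ell = (col_mx F H)^T *m w.
  apply: tr_range_of_orth_ker => x; rewrite mul_col_mx -(@col_mx0 R m l 1).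
  move=> /eq_col_mx [Fx Hx]; apply: contrapT => ell_x; apply: no_x.
  by exists x; split => //; apply/eqP.
rewrite -(vsubmxK w) tr_col_mx mul_row_col.
by exists (usubmx w) => //; exists (dsubmx w).
Qed.

End Range.

Section SaddlePoint.
Variables (R : realType) (m n p l : nat).
Variables (F : 'M[R]_(m, n)) (B : 'M[R]_(m, p)) (H : 'M[R]_(l, n)).
Variables (Q1 : 'M[R]_p) (Q2 : 'M[R]_l) (ell : 'cV[R]_n).
Hypotheses (Q1_spd : spd Q1) (Q2_spd : spd Q2).

Let G := B *m invmx Q1 *m B^T.

(* The system solved by (p, z) reads S *m col_mx p z = col_mx ell 0. *)
Let S := block_mx (H^T *m Q2 *m H) F^T F (- G).

Lemma saddle_tr : S^T = S.
Proof.
have GT : G^T = G by rewrite /G !trmx_mul trmxK spd_invmx_tr // mulmxA.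
by rewrite /S tr_block_mx trmxK linearN /= GT !trmx_mul trmxK Q2_spd.1 mulmxA.
Qed.

Lemma saddle_ker (x : 'cV[R]_n) (z : 'cV[R]_m) :
  S *m col_mx x z = 0 -> F *m x = 0 /\ H *m x = 0.
Proof.
rewrite /S mul_block_col -(@col_mx0 R n m 1) => /eq_col_mx [e1 e2].
have Fx : F *m x = G *m z by apply/eqP; rewrite -subr_eq0 -mulNmx e2.
have Gz : dotv z (G *m z) = dotv (invmx Q1 *m (B^T *m z)) (B^T *m z).
  by rewrite /G -!mulmxA dotv_mulmxr dotvC.
have /eqP : dotv x (H^T *m Q2 *m H *m x + F^T *m z) = 0 by rewrite e1 dotv0r.
rewrite dotvDr ![dotv x _]dotvC -!mulmxA [dotv (H^T *m _) _]dotv_mulmxl.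
rewrite [dotv (F^T *m _) _]dotv_mulmxl !trmxK Fx Gz.
rewrite paddr_eq0 ?(spd_form_ge0 Q2_spd) ?(spd_invmx_form_ge0 Q1_spd) //.
rewrite spd_invmx_form // => /andP [/eqP/(spd_form_eq0 Q2_spd) Hx].
move=> /eqP/(spd_form_eq0 Q1_spd) Q1Bz.
by split; rewrite // /G -!mulmxA Q1Bz mulmx0.
Qed.

Lemma saddle_point_solvable : scrF F H ell ->
  exists (pv : 'cV[R]_n) (zh : 'cV[R]_m),
    F *m pv = B *m invmx Q1 *m B^T *m zh /\
    F^T *m zh = ell - H^T *m (Q2 *m (H *m pv)).
Proof.
move=> ell_in.
have [w] : exists w : 'cV[R]_(n + m), col_mx ell 0 = S^T *m w.
  apply: tr_range_of_orth_ker => xz; rewrite -(vsubmxK xz) dotv_col_mx dotv0l addr0.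
  by move=> /saddle_ker [Fx Hx]; exact: scrF_orth_ker ell_in Fx Hx.
rewrite saddle_tr -(vsubmxK w) /S mul_block_col => /eq_col_mx [e1 e2].
exists (usubmx w), (dsubmx w); split.
  by apply/eqP; rewrite -subr_eq0 -mulNmx e2.
by rewrite e1 -!mulmxA addrAC subrr add0r.
Qed.

End SaddlePoint.

Section Moments.
Local Open Scope ereal_scope.
Context {d} {T : measurableType d} {R : realType} {P : probability T R}.

Lemma Lfun1_lincomb (I : finType) (a : I -> R) (X : I -> T -> R) :
  (forall i, X i \in Lfun P 1) -> (fun w => \sum_i a i * X i w)%R \in Lfun P 1.
Proof.
move=> XL; rewrite -(fct_sumE _ _ (fun i w => a i * X i w)%R).
by apply: rpred_sum => i _; exact: rpredZ.
Qed.

Lemma expectation_lincomb (I : finType) (a : I -> R) (X : I -> T -> R) :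
  (forall i, X i \in Lfun P 1) ->
  'E_P[fun w => \sum_i a i * X i w]%R = (\sum_i a i * fine 'E_P[X i])%:E.
Proof.
move=> XL; have aXL i : a i \o* X i \in Lfun P 1 by exact: Lfun_scale.
have := @expectation_sum _ _ _ P (map (fun i => a i \o* X i) (index_enum I)).
rewrite !big_map fct_sumE => sumE.
rewrite (_ : (fun w => _) = fun w => \sum_i (a i \o* X i) w)%R; last first.
  by apply/funext => w; apply: eq_bigr => i _; rewrite mulrC.
rewrite sumE => [|_ /mapP [i _ ->] //]; rewrite -sumEFin; apply: eq_bigr => i _.
by rewrite expectationZl // EFinM fineK ?expectation_fin_num.
Qed.

Lemma probability_Lfun_subset12 (f : T -> R) : f \in Lfun P 2%:E -> f \in Lfun P 1.
Proof. exact: Lfun_subset12 (fin_num_measure _ _ _) _. Qed.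

Context {l : nat} {eta : 'I_l -> T -> R}.
Hypothesis eta_L2 : forall i, eta i \in Lfun P 2%:E.

Let eta_L1 i : eta i \in Lfun P 1.
Proof. exact: probability_Lfun_subset12. Qed.

Lemma noise_dotv_sum (a : 'cV[R]_l) :
  (fun w => dotv a (rvec eta w)) = (fun w => \sum_i a i 0 * eta i w)%R.
Proof. by apply/funext => w; apply: eq_bigr => i _; rewrite mxE. Qed.

Lemma noise_form_sum (Q : 'M[R]_l) :
  (fun w => dotv (Q *m rvec eta w) (rvec eta w)) =
  (fun w => \sum_(ij : 'I_l * 'I_l) Q ij.1 ij.2 * (eta ij.2 \* eta ij.1) w)%R.
Proof.
apply/funext => w; rewrite /dotv -(pair_bigA _ (fun i j => Q i j * (eta j \* eta i) w)%R).
apply: eq_bigr => i _ /=.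
by rewrite !mxE big_distrl; apply: eq_bigr => j _; rewrite !mxE /= mulrA.
Qed.

Lemma Lfun1_noise_dotv (a : 'cV[R]_l) : (fun w => dotv a (rvec eta w)) \in Lfun P 1.
Proof. by rewrite noise_dotv_sum; exact: Lfun1_lincomb. Qed.

Lemma Lfun1_noise_form (Q : 'M[R]_l) :
  (fun w => dotv (Q *m rvec eta w) (rvec eta w)) \in Lfun P 1.
Proof.
by rewrite noise_form_sum; apply: Lfun1_lincomb => ij; exact: Lfun2_mul_Lfun1.
Qed.

Lemma expectation_noise_dotv (a : 'cV[R]_l) :
  (forall i, 'E_P[eta i] = 0) -> 'E_P[fun w => dotv a (rvec eta w)] = 0%:E.
Proof.
move=> eta_mean0; rewrite noise_dotv_sum expectation_lincomb //.
by rewrite big1 // => i _; rewrite eta_mean0 mulr0.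
Qed.

Lemma expectation_noise_form (Q : 'M[R]_l) :
  'E_P[fun w => dotv (Q *m rvec eta w) (rvec eta w)] =
  (\tr (Q *m corr_mx P eta))%:E.
Proof.
rewrite noise_form_sum expectation_lincomb; last by move=> ij; exact: Lfun2_mul_Lfun1.
rewrite -(pair_bigA _ (fun i j => Q i j * fine ('E_P[eta j \* eta i]))%R) /mxtrace.
congr EFin; apply: eq_bigr => i _ /=.
by rewrite mxE; apply: eq_bigr => j _; rewrite !mxE.
Qed.

End Moments.

Section NoiseError.
Local Open Scope ereal_scope.
Context {d} {T : measurableType d} {R : realType} (P : probability T R).
Variables (l : nat) (Q2 : 'M[R]_l) (eta : 'I_l -> T -> R).
Hypotheses (Q2_spd : spd Q2) (eta_adm : admissible_noise P Q2 eta).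

(* Pointwise, Cauchy-Schwarz bounds (u, eta)^2 by (Q2^-1 u, u) (Q2 eta, eta),
   whose mean is at most (Q2^-1 u, u) since tr (Q2 R_eta) <= 1. *)
Lemma noise_err_le (u : 'cV[R]_l) (t : R) :
  'E_P[fun w => (t - dotv u (rvec eta w)) ^+ 2]%R <=
  (t ^+ 2 + dotv (invmx Q2 *m u) u)%:E.
Proof.
have [eta_L2 [eta_mean0 tr_le1]] := eta_adm.
set K := dotv (invmx Q2 *m u) u.
set s := fun w => dotv u (rvec eta w).
set q := fun w => dotv (Q2 *m rvec eta w) (rvec eta w).
have sL : s \in Lfun P 1 := Lfun1_noise_dotv eta_L2 u.
have qL : q \in Lfun P 1 := Lfun1_noise_form eta_L2 Q2.
set g := (cst (t ^+ 2) \+ ((- (2 * t)) \o* s \+ K \o* q))%R.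
have err_le w : ((t - s w) ^+ 2 <= g w)%R.
  have cs : (s w ^+ 2 <= K * q w)%R := spd_Cauchy_Schwarz Q2_spd u (rvec eta w).
  rewrite /g /=; nra.
have gL : g \in Lfun P 1.
  by rewrite rpredD ?Lfun_cst // rpredD // Lfun_scale.
have Eg : 'E_P[g] = (t ^+ 2 + K * \tr (Q2 *m corr_mx P eta))%:E.
  rewrite !expectationD ?rpredD ?Lfun_scale ?Lfun_cst // expectation_cst.
  rewrite !expectationZl // expectation_noise_dotv // expectation_noise_form //.
  by rewrite -!EFinM -!EFinD mulr0 add0r expr2.
apply: (le_trans (y := 'E_P[g])).
  apply: expectation_le => [|||w|].
  - apply/measurable_realfun.measurable_funX/measurable_realfun.measurable_funB => //.
    by have := sub_Lfun_mfun sL; rewrite inE.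
  - by have := sub_Lfun_mfun gL; rewrite inE.
  - by move=> w; exact: sqr_ge0.
  - exact: le_trans (sqr_ge0 _) (err_le w).
  - exact: aeW.
by rewrite Eg lee_fin lerD2l ler_piMr ?spd_invmx_form_ge0.
Qed.

End NoiseError.

Section FairCoin.
Local Open Scope ereal_scope.
Context {R : realType}.

Definition fair_coin : probability bool R := bernoulli_prob (2^-1 : R).

Definition coin_sign (b : bool) : R := if b then 1%R else (-1)%R.

Lemma expectation_fair_coin_ge0 (f : bool -> R) : (forall b, 0 <= f b)%R ->
  'E_fair_coin[f] = (2^-1 * f true + 2^-1 * f false)%:E.
Proof.
move=> f_ge0; rewrite unlock integral_bernoulli_prob; last by move=> b; rewrite lee_fin.
  by rewrite -!EFinM -EFinD /unstable.onem; congr EFin; field.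
by rewrite invr_ge0 ler0n invf_le1 ?ler1n.
Qed.

Lemma fair_coin_Lfun2_abs_cst (f : bool -> R) :
  `|f true|%R = `|f false|%R -> f \in Lfun fair_coin 2%:E.
Proof.
move=> f_abs; rewrite inE; apply/andP; split; first by rewrite inE /= => _ Y _; rewrite setTI.
rewrite inE /= /finite_norm -Lnorm_abse.
have -> : abse \o (EFin \o f) = abse \o (EFin \o cst `|f true|%R).
  by apply/funext => -[] /=; rewrite ?f_abs normr_id.
rewrite Lnorm_abse.
by have := Lfun_cst fair_coin `|f true|%R 2; rewrite inE => /andP[_]; rewrite inE.
Qed.

Lemma fair_coin_Lfun2 (f : bool -> R) : f \in Lfun fair_coin 2%:E.
Proof.
set a := ((f true + f false) / 2)%R; set c := ((f true - f false) / 2)%R.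
have -> : f = (cst a + (fun b => coin_sign b * c))%R.
  by apply/funext => -[]; rewrite addrfctE /= /a /c; field.
have a_L2 : cst a \in Lfun fair_coin 2%:E by exact: fair_coin_Lfun2_abs_cst.
have c_L2 : (fun b => coin_sign b * c)%R \in Lfun fair_coin 2%:E.
  by apply: fair_coin_Lfun2_abs_cst; rewrite /= mul1r mulN1r normrN.
by have := rpredD a_L2 c_L2; move=> /(_ (lee1n 2)).
Qed.

Lemma expectation_coin_sign : 'E_fair_coin[coin_sign] = 0%:E.
Proof.
have coin_L1 (f : bool -> R) : f \in Lfun fair_coin 1.
  exact/probability_Lfun_subset12/fair_coin_Lfun2.
have -> : coin_sign = ((fun b => coin_sign b + 1) \- cst 1)%R.
  by apply/funext => b /=; rewrite addrK.
rewrite expectationB // expectation_cst expectation_fair_coin_ge0; last first.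
  by case => /=; rewrite ?addNr // ler0n.
by rewrite -EFinB /= addNr mulr0 addr0; congr EFin; field.
Qed.

Lemma expectation_coin_err (t k : R) :
  'E_fair_coin[fun b => (t - coin_sign b * k) ^+ 2]%R = (t ^+ 2 + k ^+ 2)%:E.
Proof.
rewrite expectation_fair_coin_ge0; last by move=> b; exact: sqr_ge0.
by congr EFin; rewrite /=; field.
Qed.

End FairCoin.

Section CoinNoise.
Context {R : realType} {l : nat}.

Definition coin_noise (w : 'cV[R]_l) : 'I_l -> bool -> R :=
  fun i b => coin_sign b * w i 0.

Lemma rvec_coin_noise (w : 'cV[R]_l) b : rvec (coin_noise w) b = coin_sign b *: w.
Proof. by apply/matrixP => i j; rewrite !mxE [j]ord1. Qed.

Lemma corr_mx_coin_noise (w : 'cV[R]_l) : corr_mx fair_coin (coin_noise w) = w *m w^T.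
Proof.
apply/matrixP => i j; rewrite !mxE big_ord1 !mxE.
have -> : (coin_noise w i \* coin_noise w j)%R = cst (w i 0 * w j 0).
  by apply/funext => -[] /=; rewrite /coin_noise /=; ring.
by rewrite expectation_cst.
Qed.

Lemma coin_noise_admissible (Q2 : 'M[R]_l) (w : 'cV[R]_l) :
  dotv (Q2 *m w) w <= 1 -> admissible_noise fair_coin Q2 (coin_noise w).
Proof.
move=> w_le1; split; first by move=> i; exact: fair_coin_Lfun2.
split; last by rewrite corr_mx_coin_noise mulmxA mxtrace_mulC trace_mx11 -dotvE dotvC.
move=> i; have -> : coin_noise w i = w i 0 \o* coin_sign by [].
rewrite expectationZl ?expectation_coin_sign ?mule0 //.
exact/probability_Lfun_subset12/fair_coin_Lfun2.
Qed.

End CoinNoise.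

(* With a^2 = (2X - A)/X^2 one gets a^2 A <= 1 from (X - A)^2 >= 0. *)
Lemma sqr_scale_bound (R : realType) (A X : R) : 0 <= A ->
  exists a : R, a ^+ 2 * A <= 1 /\ 2 * X - A <= (a * X) ^+ 2.
Proof.
move=> A_ge0; have [le0|gt0] := leP (2 * X - A) 0.
  by exists 0; rewrite expr0n /= !mul0r expr0n ler01.
have X2_gt0 : 0 < X ^+ 2.
  by rewrite lt_neqAle sqr_ge0 andbT eq_sym sqrf_eq0; apply: contraTneq gt0 => ->; lra.
have r_ge0 : 0 <= (2 * X - A) / X ^+ 2 by rewrite divr_ge0 ?sqr_ge0 ?ltW.
exists (Num.sqrt ((2 * X - A) / X ^+ 2)); rewrite exprMn sqr_sqrtr //.
rewrite divfK ?gt_eqF //; split => //.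
rewrite mulrAC ler_pdivrMr // mul1r.
have := sqr_ge0 (X - A); nra.
Qed.

Section MinimaxError.
Local Open Scope ereal_scope.
Variables (R : realType) (m n p l : nat).
Variables (F : 'M[R]_(m, n)) (B : 'M[R]_(m, p)) (H : 'M[R]_(l, n)).
Variables (Q1 : 'M[R]_p) (Q2 : 'M[R]_l) (ell : 'cV[R]_n).
Hypotheses (Q1_spd : spd Q1) (Q2_spd : spd Q2).

Local Notation sigma := (sigma_err F B H Q1 Q2 ell).

Lemma sigma_err_ge_sample u c x f w :
  F *m x = B *m f -> (dotv (Q1 *m f) f <= 1)%R -> (dotv (Q2 *m w) w <= 1)%R ->
  (((dotv ell x - dotv u (H *m x) - c) ^+ 2 + dotv u w ^+ 2)%R%:E <= sigma u c).
Proof.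
move=> Fx f_le1 w_le1; apply: ereal_sup_ubound.
exists x, f; split => //; split => //.
exists default_measure_display, bool, fair_coin, (coin_noise w).
split; first exact: coin_noise_admissible.
rewrite -expectation_coin_err; congr expectation; apply/funext => b.
by rewrite rvec_coin_noise dotvDr dotvZr; congr (_ ^+ 2)%R; ring.
Qed.

(* Evaluating at x and at -x, one of the two errors (A - c)^2, (A + c)^2 is at
   least A^2. *)
Lemma sigma_err_ge u c x f w :
  F *m x = B *m f -> (dotv (Q1 *m f) f <= 1)%R -> (dotv (Q2 *m w) w <= 1)%R ->
  (((dotv ell x - dotv u (H *m x)) ^+ 2 + dotv u w ^+ 2)%R%:E <= sigma u c).
Proof.
move=> Fx f_le1 w_le1; set A := (dotv ell x - dotv u (H *m x))%R.
have [Ac_le0|Ac_gt0] := leP (A * c)%R 0%R.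
  apply: le_trans (sigma_err_ge_sample u c Fx f_le1 w_le1).
  by rewrite lee_fin lerD2r -/A; nra.
have Fx' : F *m - x = B *m - f by rewrite !mulmxN Fx.
have f'_le1 : (dotv (Q1 *m - f) (- f) <= 1)%R by rewrite dotv_form_opp.
apply: le_trans (sigma_err_ge_sample u c Fx' f'_le1 w_le1).
rewrite lee_fin lerD2r mulmxN !dotvNr.
have -> : (- dotv ell x - - dotv u (H *m x) - c = - (A + c))%R by rewrite /A; ring.
by rewrite sqrrN; nra.
Qed.

Lemma sigma_err_notin_scrF u c : ~ scrF F H ell -> sigma u c = +oo.
Proof.
move=> /notin_scrF_ker [x [Fx Hx ell_x]]; apply: eq_infty => r.
set a := ((`|r| + 1) / dotv ell x)%R.
have Fax : F *m (a *: x) = B *m 0 by rewrite -scalemxAr Fx scaler0 mulmx0.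
have zero_le1 k (Q : 'M[R]_k) : (dotv (Q *m 0) 0 <= 1)%R by rewrite mulmx0 dotv0l ler01.
apply: le_trans (sigma_err_ge u c Fax (zero_le1 _ _) (zero_le1 _ _)).
rewrite lee_fin -scalemxAr Hx scaler0 !dotv0r subr0 dotvZr divfK // expr0n addr0.
have := ler_norm r; nra.
Qed.

Section Solution.
Variables (pv : 'cV[R]_n) (zh : 'cV[R]_m).
Hypotheses (Fpv : F *m pv = B *m invmx Q1 *m B^T *m zh)
  (Fzh : F^T *m zh = (ell - H^T *m (Q2 *m (H *m pv)))%R).

Let g := invmx Q1 *m (B^T *m zh).
Let A := dotv (Q1 *m g) g.
Let C := dotv (Q2 *m (H *m pv)) (H *m pv).

Let Fpv_g : F *m pv = B *m g.
Proof. by rewrite Fpv -!mulmxA. Qed.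

Lemma dotv_ell_solution : dotv ell pv = (A + C)%R.
Proof.
rewrite -(subrK (H^T *m (Q2 *m (H *m pv))) ell) -Fzh dotvDl.
rewrite [dotv (F^T *m _) _]dotv_mulmxl [dotv (H^T *m _) _]dotv_mulmxl !trmxK Fpv_g.
by rewrite dotvC dotv_mulmxl /A /g spd_invmxK // dotvC.
Qed.

Lemma sigma_err_ge_solution u c : (dotv ell pv)%:E <= sigma u c.
Proof.
set X := (dotv ell pv - dotv u (H *m pv))%R; set Y := dotv u (H *m pv).
have [a [a_le1 aX]] := sqr_scale_bound X (spd_form_ge0 Q1_spd g : 0 <= A)%R.
have [b [b_le1 bY]] := sqr_scale_bound Y (spd_form_ge0 Q2_spd (H *m pv) : 0 <= C)%R.
have Fapv : F *m (a *: pv) = B *m (a *: g) by rewrite -!scalemxAr Fpv_g.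
have ag_le1 : (dotv (Q1 *m (a *: g)) (a *: g) <= 1)%R by rewrite dotv_form_scale.
have bH_le1 : (dotv (Q2 *m (b *: (H *m pv))) (b *: (H *m pv)) <= 1)%R.
  by rewrite dotv_form_scale.
apply: le_trans (sigma_err_ge u c Fapv ag_le1 bH_le1).
rewrite lee_fin -scalemxAr !dotvZr -mulrBr -/X -/Y dotv_ell_solution.
have XY : (X + Y = A + C)%R by rewrite /X subrK dotv_ell_solution.
lra.
Qed.

Lemma sigma_err_solution_le : sigma (Q2 *m (H *m pv)) 0%R <= (dotv ell pv)%:E.
Proof.
apply: ge_ereal_sup => _ [x [f [Fx [f_le1 [d [T [P [eta [eta_adm ->]]]]]]]]].
set u := Q2 *m (H *m pv); set t := (dotv ell x - dotv u (H *m x))%R.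
have -> : (fun w => (dotv ell x - (dotv u (H *m x + rvec eta w) + 0)) ^+ 2)%R
    = (fun w => (t - dotv u (rvec eta w)) ^+ 2)%R.
  by apply/funext => w; rewrite addr0 dotvDr opprD addrA.
apply: le_trans (noise_err_le Q2_spd eta_adm u t) _.
have -> : invmx Q2 *m u = H *m pv by rewrite mulmxA mulVmx ?spd_unitmx // mul1mx.
have tE : t = dotv (B^T *m zh) f.
  by rewrite /t /u dotv_mulmxr -dotvBl -Fzh dotv_mulmxl trmxK Fx dotvC dotv_mulmxl dotvC.
have t2_le : (t ^+ 2 <= A)%R.
  rewrite tE; apply: le_trans (spd_Cauchy_Schwarz Q1_spd _ f) _.
  by rewrite spd_invmx_form // -/g -/A ler_piMr // spd_form_ge0.
by rewrite dotv_ell_solution lee_fin dotvC lerD2r.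
Qed.

End Solution.

Lemma minimax_err_attained u0 c0 (v : \bar R) :
  sigma u0 c0 <= v -> (forall u c, v <= sigma u c) ->
  sigma u0 c0 = minimax_err F B H Q1 Q2 ell /\ minimax_err F B H Q1 Q2 ell = v.
Proof.
move=> sigma0_le v_le.
have v_le_inf : v <= minimax_err F B H Q1 Q2 ell.
  by apply: le_ereal_inf_tmp => _ [u _ [c _ <-]].
have inf_le : minimax_err F B H Q1 Q2 ell <= sigma u0 c0.
  by apply: ereal_inf_lbound; exists u0 => //; exists c0.
have inf_eq : minimax_err F B H Q1 Q2 ell = v.
  by apply/le_anti; rewrite v_le_inf (le_trans inf_le sigma0_le).
by rewrite inf_eq; split => //; apply/le_anti; rewrite sigma0_le -inf_eq inf_le.
Qed.

End MinimaxError.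

Theorem mainTheorem1 (R : realType) (m n p l : nat)
  (F : 'M[R]_(m, n)) (B : 'M[R]_(m, p)) (H : 'M[R]_(l, n))
  (Q1 : 'M[R]_p) (Q2 : 'M[R]_l) (ell : 'cV[R]_n) :
  spd Q1 -> spd Q2 ->
  (scrF F H ell ->
     (exists (pv : 'cV[R]_n) (zh : 'cV[R]_m),
        F *m pv = B *m invmx Q1 *m B^T *m zh /\
        F^T *m zh = ell - H^T *m (Q2 *m (H *m pv))) /\
     (forall (pv : 'cV[R]_n) (zh : 'cV[R]_m),
        F *m pv = B *m invmx Q1 *m B^T *m zh ->
        F^T *m zh = ell - H^T *m (Q2 *m (H *m pv)) ->
        sigma_err F B H Q1 Q2 ell (Q2 *m (H *m pv)) 0 = minimax_err F B H Q1 Q2 ell /\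
        minimax_err F B H Q1 Q2 ell = (dotv ell pv)%:E)) /\
  (~ scrF F H ell -> minimax_err F B H Q1 Q2 ell = +oo%E).
Proof.
move=> Q1_spd Q2_spd; split; last first.
  move=> ell_notin; apply/ereal_inf_pinfty => _ [u _ [c _ <-]] /=.
  exact: sigma_err_notin_scrF ell_notin.
move=> ell_in; split; first exact: saddle_point_solvable.
move=> pv zh Fpv Fzh; apply: minimax_err_attained.
  exact: (sigma_err_solution_le Q1_spd Q2_spd Fpv Fzh).
by move=> u c; exact: (sigma_err_ge_solution Q1_spd Q2_spd Fpv Fzh).
Qed.
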